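(* Under the standing assumptions, $\sum_{n\eta_3\le S\le n}\Phi(S)=o(1)$ as $n\to\infty$, the sum being over integers $S$.
   Context: Parameters: integer $k\ge2$, constants $\alpha>0$, $r>0$, $0<p<1$; $d=n^{\alpha}$ (treated as an integer), $m=n\ln d$, $\tau=\frac1{1-p}$, $r_{cr}=\frac1{\ln\tau}$. Standing assumptions: $(2k-1)\alpha>1$, $k\alpha\le1$, $k\ge\frac{\tau\ln\tau}{\tau-1}$, and $r<r_{cr}$. Notation: $f(s)=1+\frac{p}{1-p}\cdot\frac{s^k-d^{-k}}{1-d^{-k}}$ for $s\in[0,1]$; $B(S)=\binom{n}{S}\left(\frac1d\right)^{S}\left(1-\frac1d\right)^{n-S}$; $W(S)=f(S/n)^{rm}$; $\Phi(S)=B(S)W(S)$. Let $\alpha_0=\frac{(2k-1)\alpha-1}{2(k-1)}$, and let $\eta_2,\eta_3,\mu$ be constants with $0<\eta_2<\eta_3<1$, $\alpha_0/\alpha-\mu\eta_2^{k-1}>0$, $\mu>\frac{kpr}{1-p}$, and $r\ln(1-p)+\eta_3>0$. *)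

From mathcomp Require Import all_boot all_order all_algebra.
From mathcomp Require Import all_classical all_reals all_analysis.
Set Implicit Arguments. Unset Strict Implicit. Unset Printing Implicit Defensive.
Import Order.TTheory GRing.Theory Num.Theory.
Local Open Scope ring_scope.

Section Defs.
Variable R : realType.

(* d = n^alpha, treated as an integer: d(n) = floor(n^alpha) *)
Definition dn (alpha : R) (n : nat) : nat := Num.truncn ((n%:R : R) `^ alpha).

Definition mn (alpha : R) (n : nat) : R := n%:R * ln ((dn alpha n)%:R).

Definition ff (k : nat) (alpha p : R) (n : nat) (s : R) : R :=
  let d : R := (dn alpha n)%:R in
  1 + p / (1 - p) * ((s ^+ k - d ^- k) / (1 - d ^- k)).

Definition BB (alpha : R) (n S : nat) : R :=
  let d : R := (dn alpha n)%:R in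
  ('C(n, S))%:R * (1 / d) ^+ S * (1 - 1 / d) ^+ (n - S).

Definition WW (k : nat) (alpha p r : R) (n S : nat) : R :=
  ff k alpha p n (S%:R / n%:R) `^ (r * mn alpha n).

Definition Phi (k : nat) (alpha p r : R) (n S : nat) : R :=
  BB alpha n S * WW k alpha p r n S.

Definition tau (p : R) : R := 1 / (1 - p).
Definition r_cr (p : R) : R := 1 / ln (tau p).

Definition alpha0 (k : nat) (alpha : R) : R :=
  ((2 * k - 1)%N%:R * alpha - 1) / (2 * (k - 1))%N%:R.

End Defs.

From mathcomp Require Import all_boot all_order all_algebra.
From mathcomp Require Import all_classical all_reals all_analysis.
From mathcomp Require Import ring lra.
Set Implicit Arguments. Unset Strict Implicit. Unset Printing Implicit Defensive.
Import Order.TTheory GRing.Theory Num.Theory.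
Import numFieldNormedType.Exports.
Local Open Scope classical_set_scope.
Local Open Scope ring_scope.

(* Write d = d(n) and c = eta3 + r ln(1-p) > 0.  For d > 1 and
   d^-1 <= s <= 1 the normalised weight f(s) lies in [1, 1/(1-p)], hence
   W(S) <= d^(-r n ln(1-p)).  For S >= eta3 n the binomial factor satisfies
   B(S) <= C(n,S) d^(-eta3 n).  Together, once eta3 >= d^-1,
          Phi(S) <= C(n,S) (d^-c)^n,
   and summing over S with the binomial identity gives
          sum_{S >= eta3 n} Phi(S) <= (2 d^-c)^n.
   Since d(n) -> oo, eventually 2 d^-c <= 1/2, so the sum is squeezed
   between 0 and (1/2)^n, which tends to 0.
   The file proves the bounds on f, W, B and Phi, the summation lemma, the
   divergence of d(n), and derives the theorem from them. *)

Section TermBounds.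
Variables (R : realType) (k : nat) (alpha p r : R).
Hypotheses (k_gt0 : (0 < k)%N) (p_gt0 : 0 < p) (p_lt1 : p < 1).

Lemma affine_tau_bounds t : 0 <= t -> t <= 1 ->
  1 <= 1 + p / (1 - p) * t <= (1 - p)^-1.
Proof.
move=> t_ge0 t_le1.
have q_gt0 : 0 < p / (1 - p) by rewrite divr_gt0 // subr_gt0.
have tau_eq : 1 + p / (1 - p) = (1 - p)^-1.
  by field; rewrite subr_eq0 eq_sym lt_eqF.
apply/andP; split; first by rewrite lerDl mulr_ge0 // ltW.
by rewrite -[X in _ <= X]tau_eq lerD2l ler_piMr // ltW.
Qed.

(* The normalised weight f is between 1 and tau = 1/(1-p) on [d^-1, 1]:
   its argument (s^k - d^-k)/(1 - d^-k) lies in [0, 1]. *)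
Lemma ff_bounds n s : 1 < (dn alpha n)%:R :> R ->
  (dn alpha n)%:R^-1 <= s -> s <= 1 -> 1 <= ff k alpha p n s <= (1 - p)^-1.
Proof.
rewrite /ff; set d : R := (dn alpha n)%:R => d_gt1 ds s_le1.
have id_gt0 : 0 < d^-1 by rewrite invr_gt0; lra.
have id_lt1 : d^-1 < 1 by rewrite invf_lt1; lra.
have e_lt1 : d ^- k < 1 by rewrite -exprVn exprn_ilt1 ?(ltW id_gt0) // -lt0n.
have e_le_sk : d ^- k <= s ^+ k by rewrite -exprVn lerXn2r ?nnegrE //; lra.
have sk_le1 : s ^+ k <= 1 by rewrite exprn_ile1 //; lra.
by apply: affine_tau_bounds; [rewrite divr_ge0 | rewrite ler_pdivrMr]; lra.
Qed.

Lemma WW_bounds n S : 0 <= r -> 1 < (dn alpha n)%:R :> R ->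
  (dn alpha n)%:R^-1 <= S%:R / n%:R :> R -> S%:R / n%:R <= 1 :> R ->
  0 <= WW k alpha p r n S <= expR (- (r * mn alpha n * ln (1 - p))).
Proof.
move=> r_ge0 d_gt1 ds s_le1.
have /andP[f_ge1 f_le] := ff_bounds d_gt1 ds s_le1.
have m_ge0 : 0 <= mn alpha n by rewrite /mn mulr_ge0 // ln_ge0 //; lra.
rewrite /WW powR_ge0 /powR gt_eqF /=; last lra.
rewrite ler_expR -mulrN -lnV ?posrE ?subr_gt0 //.
apply: ler_wpM2l; first exact: mulr_ge0.
by rewrite ler_ln ?posrE ?invr_gt0 ?subr_gt0 //; lra.
Qed.

End TermBounds.

Lemma BB_bounds (R : realType) (alpha eta : R) n S :
  1 < (dn alpha n)%:R :> R -> n%:R * eta <= S%:R ->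
  0 <= BB alpha n S <= 'C(n, S)%:R * expR (- (n%:R * eta * ln (dn alpha n)%:R)).
Proof.
rewrite /BB; set d : R := (dn alpha n)%:R => d_gt1 S_ge.
have id_ge0 : 0 <= 1 / d by rewrite div1r invr_ge0; lra.
have id_le1 : 1 / d <= 1 by rewrite div1r invf_le1; lra.
have q_ge0 : 0 <= (1 - 1 / d) ^+ (n - S) by rewrite exprn_ge0 //; lra.
have q_le1 : (1 - 1 / d) ^+ (n - S) <= 1 by rewrite exprn_ile1 //; lra.
have pow_le : (1 / d) ^+ S <= expR (- (n%:R * eta * ln d)).
  have -> : 1 / d = expR (- ln d) by rewrite expRN lnK ?div1r // posrE; lra.
  by rewrite -expRM_natl ler_expR mulrN lerN2 ler_wpM2r // ln_ge0 //; lra.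
rewrite -mulrA; apply/andP; split.
  by rewrite mulr_ge0 // mulr_ge0 // exprn_ge0.
apply: ler_wpM2l => //; rewrite -[X in _ <= X]mulr1.
exact: ler_pM (exprn_ge0 _ id_ge0) q_ge0 pow_le q_le1.
Qed.

Lemma Phi_bounds (R : realType) (k : nat) (alpha p r eta : R) n S :
  (0 < k)%N -> 0 < p -> p < 1 -> 0 <= r ->
  (0 < n)%N -> (S <= n)%N -> n%:R * eta <= S%:R ->
  1 < (dn alpha n)%:R :> R -> (dn alpha n)%:R^-1 <= eta ->
  0 <= Phi k alpha p r n S <=
  'C(n, S)%:R * expR (- (n%:R * ((eta + r * ln (1 - p)) * ln (dn alpha n)%:R))).
Proof.
move=> k_gt0 p_gt0 p_lt1 r_ge0 n_gt0 S_le S_ge d_gt1 d_eta.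
have n_pos : 0 < n%:R :> R by rewrite ltr0n.
have s_ge : eta <= S%:R / n%:R :> R by rewrite ler_pdivlMr // mulrC.
have s_le1 : S%:R / n%:R <= 1 :> R by rewrite ler_pdivrMr // mul1r ler_nat.
have /andP[B_ge0 B_le] := BB_bounds d_gt1 S_ge.
have /andP[W_ge0 W_le] :=
  WW_bounds k_gt0 p_gt0 p_lt1 r_ge0 d_gt1 (le_trans d_eta s_ge) s_le1.
rewrite /Phi mulr_ge0 //= (le_trans (ler_pM B_ge0 W_ge0 B_le W_le)) //.
have split_exp : - (n%:R * ((eta + r * ln (1 - p)) * ln (dn alpha n)%:R)) =
    - (n%:R * eta * ln (dn alpha n)%:R) + - (r * mn alpha n * ln (1 - p)).
  by rewrite /mn; ring.
by rewrite split_exp expRD mulrA.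
Qed.

(* Terms dominated by C(n,S) x^n sum (over any selection of S) to at most
   (2x)^n, by the binomial identity sum_S C(n,S) = 2^n. *)
Lemma binomial_dominated_sum (R : realType) (n : nat) (P : pred nat)
    (a : nat -> R) (x : R) : 0 <= x ->
  (forall S, (S <= n)%N -> P S -> 0 <= a S <= 'C(n, S)%:R * x ^+ n) ->
  0 <= \sum_(0 <= S < n.+1 | P S) a S <= (2 * x) ^+ n.
Proof.
move=> x_ge0 a_bnd; rewrite big_mkord.
have a_bnd' (i : 'I_n.+1) : P i -> 0 <= a i <= 'C(n, i)%:R * x ^+ n.
  by apply: a_bnd; rewrite -ltnS.
apply/andP; split.
  by apply: sumr_ge0 => i /a_bnd' /andP[].
have binom : \sum_(i < n.+1) 'C(n, i)%:R = 2 ^+ n :> R.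
  by rewrite -[2]/(1 + 1 : R) exprD1n; apply: eq_bigr => i _; rewrite expr1n.
rewrite exprMn -binom mulr_suml big_mkcond /=.
apply: ler_sum => i _; case: ifP => [/a_bnd' /andP[] // | _].
by rewrite mulr_ge0 ?exprn_ge0.
Qed.

Lemma dn_large (R : realType) (alpha D : R) : 0 < alpha -> 0 <= D ->
  exists N : nat, forall n, (N <= n)%N -> D < (dn alpha n)%:R.
Proof.
move=> alpha_gt0 D_ge0.
set x := (D + 1) `^ alpha^-1.
have x_ge0 : 0 <= x by apply: powR_ge0.
exists (Num.truncn x).+1 => n n_ge.
have /andP[_ x_lt] := truncn_itv x_ge0.
have x_le : x <= n%:R by apply: le_trans (ltW x_lt) _; rewrite ler_nat.
have D1_le : D + 1 <= n%:R `^ alpha.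
  have -> : D + 1 = x `^ alpha.
    by rewrite /x -powRrM mulVf ?gt_eqF // powRr1 //; lra.
  by apply: ge0_ler_powR; rewrite ?nnegrE //; lra.
have /andP[_] := truncn_itv (powR_ge0 (n%:R : R) alpha).
by rewrite /dn -addn1 natrD; lra.
Qed.

Lemma dn_eventually (R : realType) (alpha eta c : R) :
  0 < alpha -> 0 < eta -> 0 < c -> exists N : nat, forall n, (N <= n)%N ->
  [/\ 1 < (dn alpha n)%:R :> R, (dn alpha n)%:R^-1 <= eta
    & 2 * expR (- (c * ln (dn alpha n)%:R)) <= 1 / 2].
Proof.
move=> alpha_gt0 eta_gt0 c_gt0.
have ieta_gt0 : 0 < eta^-1 by rewrite invr_gt0.
have E_gt0 : 0 < expR (ln 4 / c) by apply: expR_gt0.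
have D_ge0 : 0 <= 1 + eta^-1 + expR (ln 4 / c) by lra.
have [N N_ok] := dn_large alpha_gt0 D_ge0.
exists N => n /N_ok; set d : R := (dn alpha n)%:R => d_large.
split; first lra.
  by rewrite -[eta]invrK lef_pV2 ?posrE //; lra.
have ln4_le : ln 4 <= c * ln d.
  by rewrite mulrC -ler_pdivrMr // -[X in X <= _]expRK ler_ln ?posrE //; lra.
have : expR (- (c * ln d)) <= 4^-1.
  by rewrite -[4^-1]lnK ?posrE // lnV ?posrE // ler_expR lerN2.
lra.
Qed.

Theorem lemma4p10 (R : realType) (k : nat) (alpha r p eta2 eta3 mu : R) :
  (2 <= k)%N -> 0 < alpha -> 0 < r -> 0 < p -> p < 1 ->
  (2 * k - 1)%N%:R * alpha > 1 ->
  k%:R * alpha <= 1 ->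
  k%:R >= tau p * ln (tau p) / (tau p - 1) ->
  r < r_cr p ->
  0 < eta2 -> eta2 < eta3 -> eta3 < 1 ->
  alpha0 k alpha / alpha - mu * eta2 ^+ (k - 1) > 0 ->
  mu > k%:R * p * r / (1 - p) ->
  r * ln (1 - p) + eta3 > 0 ->
  (fun n : nat => \sum_(0 <= S < n.+1 | n%:R * eta3 <= S%:R)
                    Phi k alpha p r n S) @ \oo --> (0 : R).
Proof.
move=> k_ge2 alpha_gt0 r_gt0 p_gt0 p_lt1 _ _ _ _ eta2_gt0 eta23 _ _ _ c_gt0.
have k_gt0 : (0 < k)%N by apply: leq_trans k_ge2.
have eta3_gt0 : 0 < eta3 by lra.
set c := eta3 + r * ln (1 - p).
have c_pos : 0 < c by rewrite /c; lra.
have [N N_ok] := dn_eventually alpha_gt0 eta3_gt0 c_pos.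
apply: (squeeze_cvgr (f := fun=> 0) (h := fun n : nat => (1 / 2 : R) ^+ n)).
- exists N.+1 => // n /= n_gt.
  have [d_gt1 d_eta ratio_small] := N_ok n (ltnW n_gt).
  set E := expR (- (c * ln (dn alpha n)%:R)) in ratio_small.
  have Phi_le S : (S <= n)%N -> n%:R * eta3 <= S%:R ->
      0 <= Phi k alpha p r n S <= 'C(n, S)%:R * E ^+ n.
    rewrite /E -expRM_natl mulrN => S_le S_ge.
    by apply: Phi_bounds => //; [exact: ltW | exact: leq_ltn_trans n_gt].
  have /andP[sum_ge0 sum_le] := binomial_dominated_sum (expR_ge0 _) Phi_le.
  rewrite sum_ge0 (le_trans sum_le) // lerXn2r ?nnegrE ?mulr_ge0 ?expR_ge0 //.
- exact: cvg_cst.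
- by apply: cvg_expr; rewrite ger0_norm; lra.
Qed.
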